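(* Let $X\subset\mathbb{P}^N$ be a projective variety such that $\operatorname{Hrk}_X(p)<\infty$ for every $p\in\mathbb{P}^N$. Then $X$ is strongly concise, i.e. for every $i\in\{0,\ldots,N\}$, $(X\cap H_i)\not\subset\bigcup_{j\ne i}H_j$.
   Context: Work in $\mathbb{P}^N$ over $\mathbb{C}$ with coordinates $x_0,\dots,x_N$; $H_i=\{x_i=0\}$. Hadamard product: $(p_0:\cdots:p_N)\star(q_0:\cdots:q_N)=(p_0q_0:\cdots:p_Nq_N)$, defined when not all $p_iq_i$ vanish. $\operatorname{Hrk}_X(q)=\min\{m\mid q=p_1\star\cdots\star p_m,\ p_i\in X\}$, or $\infty$ if no such decomposition exists. *)

From HB Require Import structures.
From mathcomp Require Import all_boot all_order all_algebra.
From mathcomp Require Import reals.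
From mathcomp Require Import complex.
From mathcomp Require Import mpoly.
Set Implicit Arguments. Unset Strict Implicit. Unset Printing Implicit Defensive.
Import Order.TTheory GRing.Theory Num.Theory.
Local Open Scope ring_scope.

Definition Cplx (R : realType) := R[i].

Section Proj.
Variable K : fieldType.
Variable N : nat.

(* Homogeneous coordinates (x_0 : ... : x_N) of a point of P^N:
   a vector indexed by 'I_(N.+1). *)
Definition coords := 'I_N.+1 -> K.

Definition is_proj_point (v : coords) : Prop := exists i, v i != 0.

Definition proj_eq (v w : coords) : Prop :=
  exists c : K, c != 0 /\ forall i, w i = c * v i.

Definition proj_subset := coords -> Prop.

Definition zero_locus (F : {mpoly K[N.+1]} -> Prop) : proj_subset :=
  fun v => is_proj_point v /\ forall f, F f -> f.@[v] = 0.

Definition zariski_closed (X : proj_subset) : Prop :=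
  exists F : {mpoly K[N.+1]} -> Prop,
    (forall f, F f -> exists d : nat, f \is d.-homog) /\
    (forall v, X v <-> zero_locus F v).

Definition proj_irreducible (X : proj_subset) : Prop :=
  (exists v, X v) /\
  forall Y Z : proj_subset, zariski_closed Y -> zariski_closed Z ->
    (forall v, X v -> Y v \/ Z v) ->
    (forall v, X v -> Y v) \/ (forall v, X v -> Z v).

Definition projective_variety (X : proj_subset) : Prop :=
  zariski_closed X /\ proj_irreducible X.

Definition hadamard (p q : coords) : coords := fun i => p i * q i.

(* q = p_1 * ... * p_m with p_1..p_m in X (m = size s >= 1), every partial
   Hadamard product being defined (a nonzero vector). *)
Fixpoint hadamard_seq (p : coords) (s : seq coords) : coords :=
  match s with
  | [::] => p
  | p' :: s' => hadamard_seq (hadamard p p') s'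
  end.

Definition Hdecomposition (X : proj_subset) (q : coords) (m : nat) : Prop :=
  exists (p : coords) (s : seq coords),
    size s = m.-1 /\ (0 < m)%N /\
    X p /\ (forall k, (k < size s)%N -> X (nth p s k)) /\
    (forall k, (k <= size s)%N -> is_proj_point (hadamard_seq p (take k s))) /\
    proj_eq (hadamard_seq p s) q.

Definition Hrk_finite (X : proj_subset) (q : coords) : Prop :=
  exists m : nat, Hdecomposition X q m.

Definition Hplane (i : 'I_N.+1) : proj_subset := fun v => v i = 0.

Definition strongly_concise (X : proj_subset) : Prop :=
  forall i : 'I_N.+1,
    ~ (forall v, X v -> Hplane i v -> exists j : 'I_N.+1, j != i /\ Hplane j v).

End Proj.

(* The point q_i with a zero at x_i and ones elsewhere has finite Hadamard
   rank.  Coordinates multiply under the Hadamard product, so in a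
   decomposition q_i = p_1 * ... * p_m some factor p_k lies on H_i while no
   factor lies on any H_j with j <> i: p_k is a point of X on H_i outside
   every other H_j. *)

From HB Require Import structures.
From mathcomp Require Import all_boot all_order all_algebra.
From mathcomp Require Import reals complex mpoly.
Set Implicit Arguments. Unset Strict Implicit. Unset Printing Implicit Defensive.
Import Order.TTheory GRing.Theory Num.Theory.
Local Open Scope ring_scope.

Section HadamardSupport.
Variables (K : fieldType) (N : nat).
Implicit Types (p q v w : coords K N) (s : seq (coords K N)) (X : proj_subset K N).

Lemma hadamard_seqE p s j : hadamard_seq p s j = \prod_(x <- p :: s) x j.
Proof.
elim: s p => [|x s IHs] p /=; first by rewrite big_seq1.
by rewrite IHs !big_cons /hadamard mulrA.
Qed.

Lemma proj_eq_eq0 v w j : proj_eq v w -> (w j == 0) = (v j == 0).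
Proof. by case=> c [c_neq0 ->]; rewrite mulf_eq0 (negbTE c_neq0). Qed.

Lemma Hdecomposition_factor_support X q m i :
  Hdecomposition X q m -> q i = 0 ->
  exists2 v, X v & v i = 0 /\ forall j, q j != 0 -> v j != 0.
Proof.
case=> p [s [_ [_ [Xp [Xs [_ eq_q]]]]]] qi0.
have Xt k : (k < size (p :: s))%N -> X (nth p (p :: s) k).
  by case: k => [|k] //=; apply: Xs.
have : \prod_(x <- p :: s) x i == 0.
  by rewrite -hadamard_seqE -(proj_eq_eq0 _ eq_q) qi0.
rewrite prodf_seq_eq0 => /(has_nthP p) [k lt_k_t /= /eqP vi0].
exists (nth p (p :: s) k); first exact: Xt.
split=> // j; rewrite (proj_eq_eq0 _ eq_q) hadamard_seqE prodf_seq_neq0.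
by move=> /(all_nthP p) /(_ k lt_k_t).
Qed.

Definition off_coord (i : 'I_N.+1) : coords K N := fun j => (j != i)%:R.

Lemma off_coord_proj_point i : (0 < N)%N -> is_proj_point (off_coord i).
Proof.
move=> N_gt0; have [j ji] : exists j : 'I_N.+1, j != i.
  have [->|i_neq0] := eqVneq i ord0; last by exists ord0; rewrite eq_sym.
  by exists ord_max; rewrite -val_eqE /= -lt0n.
by exists j; rewrite /off_coord ji oner_neq0.
Qed.

End HadamardSupport.

Arguments off_coord {K N} i.

Theorem mainTheorem4 (R : realType) (N : nat) (X : proj_subset (Cplx R) N) :
  (1 <= N)%N ->
  projective_variety X ->
  (forall p : coords (Cplx R) N, is_proj_point p -> Hrk_finite X p) ->
  strongly_concise X.
Proof.
move=> N_gt0 _ Hrk_fin i X_Hi_covered.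
have [m dec] := Hrk_fin _ (off_coord_proj_point _ i N_gt0).
have off_i0 : off_coord i i = 0 :> Cplx R by rewrite /off_coord eqxx.
have [v Xv [vi0 v_off_i]] := Hdecomposition_factor_support dec off_i0.
have [j [ji vj0]] := X_Hi_covered v Xv vi0.
have /negP[] : v j != 0 by apply: v_off_i; rewrite /off_coord ji oner_neq0.
exact/eqP.
Qed.
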